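(* Let $\mu$ be a symmetric measure on $L_n$ with $C^0_\mu<3$, and write $a_j=\mu(j)$. Then $a_i<a_j<\frac{j}{i}a_i$ for all $1\le i<j\le\lceil n/2\rceil$.
   Context: $L_n$ is the path graph with vertices $\{1,\dots,n\}$ and edges $\{j,j+1\}$, with distance $|i-j|$. A measure on $L_n$ is a weight function $\mu:\{1,\dots,n\}\to(0,\infty)$, $\mu(A)=\sum_{v\in A}\mu(v)$; it is symmetric if $\mu(j)=\mu(n+1-j)$ for all $j$. $B(x,r)=\{y:|x-y|\le r\}$ and $C^0_\mu=\max_{1\le x\le n}\mu(B(x,1))/\mu(x)$. *)

From mathcomp Require Import all_boot all_order all_algebra.
Set Implicit Arguments. Unset Strict Implicit. Unset Printing Implicit Defensive.
Import Order.TTheory GRing.Theory Num.Theory.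
Local Open Scope ring_scope.

(* The path graph L_n has vertex set {1,...,n} (as naturals) and distance |i-j|. *)
Definition dist_L (i j : nat) : nat := ((i - j) + (j - i))%N.

(* A measure on L_n: mu : nat -> R, positive on {1..n} (values outside ignored). *)
Definition is_measure_L (R : realFieldType) (n : nat) (mu : nat -> R) : Prop :=
  forall v : nat, (1 <= v <= n)%N -> 0 < mu v.

Definition symmetric_L (R : realFieldType) (n : nat) (mu : nat -> R) : Prop :=
  forall j : nat, (1 <= j <= n)%N -> mu j = mu (n.+1 - j)%N.

Definition ball_mass (R : realFieldType) (n : nat) (mu : nat -> R) (x r : nat) : R :=
  \sum_(1 <= y < n.+1 | (dist_L x y <= r)%N) mu y.

(* C^0_mu < c  iff  max_{1<=x<=n} mu(B(x,1))/mu(x) < c ; for n >= 1 the max exists. *)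
Definition C0_lt (R : realFieldType) (n : nat) (mu : nat -> R) (c : R) : Prop :=
  forall x : nat, (1 <= x <= n)%N -> ball_mass n mu x 1 / mu x < c.

From mathcomp Require Import all_boot all_order all_algebra.
From mathcomp Require Import zify ring lra.
Import Order.TTheory GRing.Theory Num.Theory.
Local Open Scope ring_scope.

(* At an interior vertex k+1 the bound C^0_mu < 3 reads mu(k) + mu(k+2) < 2 mu(k+1),
   so mu is a strictly concave sequence; at the vertex 1 it reads mu(2) < 2 mu(1),
   i.e. concavity persists after setting mu(0) := 0.  A strictly concave sequence that
   is symmetric about (n+1)/2 increases strictly up to its middle: its increment at x
   exceeds its increment at n-x, which by symmetry is the opposite one.  Concavity
   through the origin makes the chord slopes mu(k)/k strictly decreasing, which is the
   upper bound mu(j) < (j/i) mu(i). *)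

Definition strict_concave_on {R : realFieldType} (f : nat -> R) (a b : nat) : Prop :=
  forall k, (a <= k)%N -> (k.+2 <= b)%N -> f k + f k.+2 < 2 * f k.+1.

Lemma homo_ltn_interval {T : Type} {r : T -> T -> Prop} {f : nat -> T} {a b p q : nat} :
  (forall y x z, r x y -> r y z -> r x z) ->
  (forall k, (a <= k < b)%N -> r (f k) (f k.+1)) ->
  (a <= p)%N -> (p < q)%N -> (q <= b)%N -> r (f p) (f q).
Proof.
move=> r_trans f_step ap pq qb.
pose D := [pred k | a <= k <= b]%N.
apply: (@homo_ltn_in _ D f r r_trans); rewrite ?inE /D ?inE /=; try lia.
- by move=> i j /andP[? ?] /andP[? ?] k /andP[? ?]; rewrite inE; lia.
- by move=> k /andP[? ?] /andP[? ?]; apply: f_step; lia.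
Qed.

Section StrictConcaveSequence.
Context {R : realFieldType} {f : nat -> R}.

Lemma concave_diff_decr {a b p q} : strict_concave_on f a b ->
  (a <= p)%N -> (p < q)%N -> (q < b)%N -> f q.+1 - f q < f p.+1 - f p.
Proof.
move=> f_concave ap pq qb.
apply: (homo_ltn_interval (r := fun x y => y < x) (f := fun k => f k.+1 - f k)
          (b := b.-1) _ _ ap pq); last lia.
  by move=> y x z xy yz; apply: lt_trans yz xy.
by move=> k kb; have := f_concave k ltac:(lia) ltac:(lia); lra.
Qed.

Lemma concave_sym_incr {a b x} : strict_concave_on f a b ->
  (forall y, (a <= y <= b)%N -> f y = f (a + b - y)%N) ->
  (a <= x)%N -> (x.*2.+1 < a + b)%N -> f x < f x.+1.
Proof.
move=> f_concave f_sym ax xab; set y := (a + b - x.+1)%N.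
have f_y : f y = f x.+1 by rewrite [RHS]f_sym //; lia.
have f_Sy : f y.+1 = f x by rewrite [RHS]f_sym; [congr f; lia | lia].
have x_lt_y : (x < y)%N by lia.
have y_lt_b : (y < b)%N by lia.
by have := concave_diff_decr f_concave ax x_lt_y y_lt_b; rewrite f_y f_Sy; lra.
Qed.

Lemma concave_mul_succ_lt {b k} : strict_concave_on f 1 b -> f 2%N < 2 * f 1%N ->
  (1 <= k < b)%N -> k%:R * f k.+1 < k.+1%:R * f k.
Proof.
move=> f_concave f_head; elim: k => [//|[_ _ | k IH kb]]; first by rewrite mul1r.
have := IH ltac:(lia); have := f_concave k.+1 ltac:(lia) ltac:(lia).
rewrite -[k.+3]addn1 -[k.+2]addn1 -[k.+1]addn1 !natrD.
have : 0 <= k%:R :> R by [].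
nra.
Qed.

Lemma concave_slope_decr {b p q} : strict_concave_on f 1 b -> f 2%N < 2 * f 1%N ->
  (1 <= p)%N -> (p < q)%N -> (q <= b)%N -> f q / q%:R < f p / p%:R.
Proof.
move=> f_concave f_head.
apply: (homo_ltn_interval (r := fun x y => y < x) (f := fun k => f k / k%:R)).
  by move=> y x z xy yz; apply: lt_trans yz xy.
move=> k /andP[k_gt0 kb].
rewrite ltr_pdivrMr ?ltr0n // mulrAC ltr_pdivlMr ?ltr0n //.
rewrite mulrC [f k * _]mulrC; apply: (concave_mul_succ_lt f_concave f_head); lia.
Qed.

End StrictConcaveSequence.

Lemma big_nat_cond_window (V : nmodType) (F : nat -> V) (P : pred nat) lo a b hi :
  (lo <= a <= b)%N -> (b <= hi)%N ->
  (forall y, (lo <= y < a)%N || (b <= y < hi)%N -> ~~ P y) ->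
  \sum_(lo <= y < hi | P y) F y = \sum_(a <= y < b | P y) F y.
Proof.
move=> /andP[la ab] bh P_out.
have sum_out c d : (forall y, (c <= y < d)%N -> ~~ P y) ->
    \sum_(c <= y < d | P y) F y = 0.
  by move=> out; rewrite big_nat_cond big_pred0 // => y; apply/andP => -[/out/negP].
rewrite (big_cat_nat la (leq_trans ab bh)) (big_cat_nat ab bh).
rewrite (sum_out lo a) ?(sum_out b hi) ?Monoid.simpm // => y y_out;
  by apply: P_out; rewrite y_out ?orbT.
Qed.

Lemma ball_mass1_inner (R : realFieldType) n (mu : nat -> R) x : (1 < x < n)%N ->
  ball_mass n mu x 1 = mu x.-1 + mu x + mu x.+1.
Proof.
case: x => [|x] xn; first by [].
have near y : (x <= y <= x.+2)%N -> (dist_L x.+1 y <= 1)%N by rewrite /dist_L; lia.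
rewrite /ball_mass (@big_nat_cond_window _ _ _ _ x x.+3); last 3 first.
- by rewrite /=; lia.
- by lia.
- by move=> y; rewrite /dist_L; lia.
rewrite big_mkcond big_ltn; last lia.
rewrite big_ltn; last lia.
rewrite big_nat1 !near; [|lia..].
rewrite /=; lra.
Qed.

Lemma ball_mass1_first (R : realFieldType) n (mu : nat -> R) : (1 < n)%N ->
  ball_mass n mu 1 1 = mu 1%N + mu 2%N.
Proof.
move=> n_gt1; rewrite /ball_mass (@big_nat_cond_window _ _ _ _ 1 3); last 3 first.
- by [].
- by lia.
- by move=> y; rewrite /dist_L; lia.
rewrite big_mkcond big_ltn // big_nat1 /=; lra.
Qed.

Section DoublingBelowThree.
Context {R : realFieldType} {n : nat} {mu : nat -> R}.
Hypotheses (mu_pos : is_measure_L n mu) (mu_C0 : C0_lt n mu 3).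

Lemma C0_lt_ball_mass (c : R) x : C0_lt n mu c -> (1 <= x <= n)%N ->
  ball_mass n mu x 1 < c * mu x.
Proof. by move=> C0c xn; rewrite -ltr_pdivrMr; [apply: C0c | apply: mu_pos]. Qed.

Lemma C0_lt3_concave : strict_concave_on mu 1 n.
Proof.
move=> k k_ge1 kn; have := @C0_lt_ball_mass _ k.+1 mu_C0 ltac:(lia).
rewrite ball_mass1_inner /=; [lra | lia].
Qed.

Lemma C0_lt3_head : (1 < n)%N -> mu 2%N < 2 * mu 1%N.
Proof.
move=> n_gt1; have := @C0_lt_ball_mass _ 1 mu_C0 ltac:(lia).
rewrite ball_mass1_first //; lra.
Qed.

End DoublingBelowThree.

Theorem lemma3p4 (R : realFieldType) (n : nat) (mu : nat -> R) :
  is_measure_L n mu -> symmetric_L n mu -> C0_lt n mu 3 ->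
  forall i j : nat, (1 <= i)%N -> (i < j)%N -> (j <= uphalf n)%N ->
    mu i < mu j /\ mu j < (j%:R / i%:R) * mu i.
Proof.
move=> mu_pos mu_sym mu_C0 i j i_ge1 ij j_half.
have j_le_n : (j <= n)%N by move: j_half; rewrite geq_uphalf_double -muln2; lia.
have mu_concave := C0_lt3_concave mu_pos mu_C0.
have mu_head := C0_lt3_head mu_pos mu_C0 (leq_ltn_trans i_ge1 (leq_trans ij j_le_n)).
split.
  apply: (homo_ltn_interval lt_trans _ i_ge1 ij j_half) => k /andP[k_ge1 k_half].
  apply: (concave_sym_incr mu_concave mu_sym k_ge1).
  by move: k_half; rewrite geq_uphalf_double -!muln2; lia.
have := concave_slope_decr mu_concave mu_head i_ge1 ij j_le_n.
rewrite ltr_pdivrMr ?ltr0n; last lia.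
by rewrite (_ : j%:R / i%:R * mu i = mu i / i%:R * j%:R) //; ring.
Qed.
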